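(* Let $p=(a,b,c)\in P$. Then no trajectory of the flow of $F_p$ enters the set $B=\{(x,y,z)\in\mathbb{R}^3: z<-b\}$.
   Context: For $p=(a,b,c)\in\mathbb{R}^3$, $F_p$ is the Rössler vector field $\dot x=-y-z,\ \dot y=x+ay,\ \dot z=bx+z(x-c)$ on $\mathbb{R}^3$. $P\subseteq\mathbb{R}^3$ is an open set of parameters such that for every $p=(a,b,c)\in P$: $a,b\in(0,1)$, $c>1$; $F_p$ has exactly two fixed points $P_{In}=(0,0,0)$ and $P_{Out}=(c-ab,b-\frac{c}{a},\frac{c}{a}-b)$, both saddle-foci, $P_{In}$ with one-dimensional stable manifold and $P_{Out}$ with one-dimensional unstable manifold; and at least one of the saddle indices at $P_{In},P_{Out}$ is $<1$. *)

From Stdlib Require Import Reals.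
From Coquelicot Require Import Coquelicot.
Open Scope R_scope.

Definition R3 := (R * R * R)%type.

Definition rossler (a b c : R) (v : R3) : R3 :=
  let '(x, y, z) := v in (- y - z, x + a * y, b * x + z * (x - c)).

Definition P_In : R3 := (0, 0, 0).
Definition P_Out (a b c : R) : R3 := (c - a * b, b - c / a, c / a - b).

Definition det3 (m11 m12 m13 m21 m22 m23 m31 m32 m33 : R) : R :=
  m11 * (m22 * m33 - m23 * m32) - m12 * (m21 * m33 - m23 * m31)
  + m13 * (m21 * m32 - m22 * m31).

(** Characteristic polynomial det(t I - DF_p(v)) of the Jacobian of F_p at v.
    DF_p(x,y,z) = [[0,-1,-1],[1,a,0],[b+z,0,x-c]]. *)
Definition jac_charpoly (a b c : R) (v : R3) (t : R) : R :=
  let '(x, y, z) := v in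
  det3 (t - 0) (0 - (-1)) (0 - (-1))
       (0 - 1) (t - a) (0 - 0)
       (0 - (b + z)) (0 - 0) (t - (x - c)).

(** v is a saddle-focus of F_p with one-dimensional stable manifold and saddle
    index nu: the Jacobian has a real eigenvalue lam < 0 and a non-real pair
    rho +- i omega with rho > 0; nu = - rho / lam. *)
Definition saddle_focus_1d_stable (a b c : R) (v : R3) (nu : R) : Prop :=
  exists lam rho om : R, lam < 0 /\ 0 < rho /\ om <> 0 /\
    (forall t, jac_charpoly a b c v t = (t - lam) * ((t - rho) ^ 2 + om ^ 2)) /\
    nu = - rho / lam.

(** v is a saddle-focus of F_p with one-dimensional unstable manifold and
    saddle index nu: real eigenvalue lam > 0, non-real pair rho +- i omega with
    rho < 0; nu = - rho / lam. *)
Definition saddle_focus_1d_unstable (a b c : R) (v : R3) (nu : R) : Prop :=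
  exists lam rho om : R, 0 < lam /\ rho < 0 /\ om <> 0 /\
    (forall t, jac_charpoly a b c v t = (t - lam) * ((t - rho) ^ 2 + om ^ 2)) /\
    nu = - rho / lam.

Definition param_conditions (p : R3) : Prop :=
  let '(a, b, c) := p in
  0 < a < 1 /\ 0 < b < 1 /\ 1 < c /\
  (forall v : R3, rossler a b c v = (0, 0, 0) <-> (v = P_In \/ v = P_Out a b c)) /\
  P_In <> P_Out a b c /\
  exists nuIn nuOut : R,
    saddle_focus_1d_stable a b c P_In nuIn /\
    saddle_focus_1d_unstable a b c (P_Out a b c) nuOut /\
    (nuIn < 1 \/ nuOut < 1).

Definition open3 (P : R3 -> Prop) : Prop :=
  forall a b c, P (a, b, c) -> exists eps : R, 0 < eps /\
    forall a' b' c', Rabs (a' - a) < eps -> Rabs (b' - b) < eps ->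
      Rabs (c' - c) < eps -> P (a', b', c').

Definition is_solution (a b c : R) (alpha beta : Rbar) (x y z : R -> R) : Prop :=
  forall t : R, Rbar_lt alpha t -> Rbar_lt t beta ->
    is_derive x t (- y t - z t) /\
    is_derive y t (x t + a * y t) /\
    is_derive z t (b * x t + z t * (x t - c)).

(* On the plane z = -b the z-component of F_p is b x - b (x - c) = b c > 0, so
   the flow crosses that plane only upwards and {z >= -b} is forward invariant. *)
From Stdlib Require Import Reals Lra.
From Coquelicot Require Import Coquelicot.
Open Scope R_scope.

Lemma continuity_pt_near (f : R -> R) (s eps : R) :
  continuity_pt f s -> 0 < eps ->
  exists d, 0 < d /\ forall t, Rabs (t - s) < d -> Rabs (f t - f s) < eps.
Proof.
  intros Hf Heps.
  destruct (proj1 (continuity_pt_locally f s) Hf (mkposreal eps Heps)) as [d Hd].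
  exists d; split; [apply cond_pos |].
  intros t Ht; exact (Hd t Ht).
Qed.

Lemma derivable_pt_lim_pos_right (f : R -> R) (s l : R) :
  derivable_pt_lim f s l -> 0 < l ->
  exists d, 0 < d /\ forall h, 0 < h < d -> f s < f (s + h).
Proof.
  intros Hf Hl.
  destruct (Hf l Hl) as [d Hd].
  exists d; split; [apply cond_pos |].
  intros h [Hh0 Hhd].
  assert (Hquot : 0 < (f (s + h) - f s) / h).
  { assert (Habs : Rabs h < d) by (rewrite Rabs_right; lra).
    specialize (Hd h ltac:(lra) Habs).
    apply Rabs_lt_between in Hd; lra. }
  assert (Hdiff : f (s + h) - f s = (f (s + h) - f s) / h * h) by (field; lra).
  assert (0 < (f (s + h) - f s) / h * h) by (apply Rmult_lt_0_compat; lra).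
  lra.
Qed.

Lemma superlevel_is_lub (E : R -> Prop) (f : R -> R) (m s : R) :
  (forall t, E t -> m <= f t) -> is_lub E s -> continuity_pt f s -> m <= f s.
Proof.
  intros HE [Hub Hlub] Hf.
  destruct (Rle_or_lt m (f s)) as [Hle | Hlt]; [exact Hle | exfalso].
  destruct (continuity_pt_near f s (m - f s) Hf ltac:(lra)) as [d [Hd Hnear]].
  assert (Hbound : is_upper_bound E (s - d / 2)).
  { intros e He.
    destruct (Rle_or_lt e (s - d / 2)) as [Hle | Hgt]; [exact Hle | exfalso].
    assert (e <= s) by (apply Hub; exact He).
    assert (Hes : Rabs (e - s) < d) by (rewrite Rabs_left1; lra).
    specialize (Hnear e Hes); apply Rabs_lt_between in Hnear.
    specialize (HE e He); lra. }
  specialize (Hlub _ Hbound); lra.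
Qed.

(* At a boundary point f s = m the positive derivative pushes f above m;
   strictly above m, continuity keeps it there. *)
Lemma superlevel_exits_right (f : R -> R) (s l m u : R) :
  derivable_pt_lim f s l -> m <= f s -> (f s = m -> 0 < l) -> s < u ->
  exists t, s < t <= u /\ m <= f t.
Proof.
  intros Hf Hm Hbd Hu.
  destruct (Req_dec (f s) m) as [Heq | Hneq].
  - destruct (derivable_pt_lim_pos_right f s l Hf (Hbd Heq)) as [d [Hd Hinc]].
    set (h := Rmin (d / 2) (u - s)).
    assert (Hh : 0 < h <= u - s /\ h < d)
      by (unfold h; apply Rmin_case_strong; intros; lra).
    exists (s + h); split; [lra |].
    specialize (Hinc h ltac:(lra)); lra.
  - assert (Hcont : continuity_pt f s)
      by (apply derivable_continuous_pt; exists l; exact Hf).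
    destruct (continuity_pt_near f s (f s - m) Hcont ltac:(lra)) as [d [Hd Hnear]].
    set (t := Rmin (s + d / 2) u).
    assert (Ht : s < t <= u /\ t < s + d)
      by (unfold t; apply Rmin_case_strong; intros; lra).
    exists t; split; [lra |].
    assert (Hts : Rabs (t - s) < d) by (rewrite Rabs_right; lra).
    specialize (Hnear t Hts); apply Rabs_lt_between in Hnear; lra.
Qed.

(* The supremum s of the times in [t0, t1] with f >= m satisfies f s >= m by
   continuity, and s < t1 is excluded by [superlevel_exits_right]. *)
Lemma superlevel_forward_invariant (f f' : R -> R) (m t0 t1 : R) :
  t0 <= t1 ->
  (forall t, t0 <= t <= t1 -> derivable_pt_lim f t (f' t)) ->
  (forall t, t0 <= t <= t1 -> f t = m -> 0 < f' t) ->
  m <= f t0 -> m <= f t1.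
Proof.
  intros H01 Hder Hbd Hm0.
  set (E := fun t => t0 <= t <= t1 /\ m <= f t).
  assert (Hbounded : bound E) by (exists t1; intros t [Ht _]; lra).
  assert (Hne : exists t, E t) by (exists t0; split; [lra | exact Hm0]).
  destruct (completeness E Hbounded Hne) as [s Hs].
  assert (Hs0 : t0 <= s) by (apply (proj1 Hs); split; [lra | exact Hm0]).
  assert (Hs1 : s <= t1) by (apply (proj2 Hs); intros t [Ht _]; lra).
  assert (Hcont : continuity_pt f s)
    by (apply derivable_continuous_pt; exists (f' s); apply Hder; lra).
  assert (Hms : m <= f s) by (apply (superlevel_is_lub E); [intros t [_ Ht] | |]; assumption).
  destruct (Req_dec s t1) as [<- | Hneq]; [exact Hms |].
  destruct (superlevel_exits_right f s (f' s) m t1) as [t [Ht Hmt]];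
    [apply Hder; lra | exact Hms | apply Hbd; lra | lra |].
  assert (t <= s) by (apply (proj1 Hs); split; [lra | exact Hmt]).
  lra.
Qed.

Lemma is_solution_z_derivable (a b c : R) (alpha beta : Rbar) (x y z : R -> R)
  (t0 t1 : R) :
  is_solution a b c alpha beta x y z -> Rbar_lt alpha t0 -> Rbar_lt t1 beta ->
  forall t, t0 <= t <= t1 -> derivable_pt_lim z t (b * x t + z t * (x t - c)).
Proof.
  intros Hsol Ht0 Ht1 t Ht.
  apply is_derive_Reals, Hsol.
  - apply (Rbar_lt_le_trans _ t0); [exact Ht0 | simpl; lra].
  - apply (Rbar_le_lt_trans _ t1); [simpl; lra | exact Ht1].
Qed.

Lemma rossler_zdot_on_plane (b c x : R) : b * x + (- b) * (x - c) = b * c.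
Proof. ring. Qed.

Theorem lemma2p6 (P : R3 -> Prop) (HPopen : open3 P)
  (HP : forall p, P p -> param_conditions p)
  (a b c : R) (Hp : P (a, b, c))
  (alpha beta : Rbar) (x y z : R -> R)
  (Hsol : is_solution a b c alpha beta x y z)
  (t0 t1 : R) (Ht0 : Rbar_lt alpha t0) (Ht1 : Rbar_lt t1 beta) (Ht01 : t0 <= t1) :
  ~ (z t0 < - b) -> ~ (z t1 < - b).
Proof.
  intros Hz0.
  destruct (HP _ Hp) as [_ [[Hb _] [Hc _]]].
  apply Rle_not_lt.
  apply (superlevel_forward_invariant z (fun t => b * x t + z t * (x t - c)) (- b) t0 t1).
  - exact Ht01.
  - exact (is_solution_z_derivable a b c alpha beta x y z t0 t1 Hsol Ht0 Ht1).
  - intros t _ Hzt.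
    rewrite Hzt, rossler_zdot_on_plane.
    apply Rmult_lt_0_compat; lra.
  - apply Rnot_lt_le; exact Hz0.
Qed.
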